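(* Consider the heteroscedastic linear model $y(i,k)=\tau_i+\mu+\mathbf g^T(k)\beta+\varepsilon(i,k)$ with treatments $i\in\{1,\ldots,v_1\}$, covariate indices $k\in\{1,\ldots,d\}$, known regressors $\mathbf g(k)\in\mathbb R^{v_2}$, uncorrelated mean-zero errors with $\mathrm{Var}(\varepsilon(i,k))=\sigma^2/\lambda_i$, $\lambda_i>0$ known. Let $\Phi$ be an eigenvalue-based information function. If there exists a $\Phi$-optimal design for $\mathbf A^T\theta$ in this model, then there exists a product design $w\otimes\alpha$ (i.e. a design with $\xi(i,k)=w_i\alpha_k$ for some probability vectors $w\in\mathbb R^{v_1}$, $\alpha\in\mathbb R^d$) that is $\Phi$-optimal for $\mathbf A^T\theta$.
   Context: Write $\theta=(\tau^T,\mu,\beta^T)^T$, $\mathbf f(i,k)=(\mathbf e_i^T,1,\mathbf g^T(k))^T$. A design $\xi$ is a nonnegative function on $\{1,\ldots,v_1\}\times\{1,\ldots,d\}$ summing to one, with moment matrix $\mathbf M(\xi)=\sum_{i,k}\xi(i,k)\lambda_i\mathbf f(i,k)\mathbf f^T(i,k)$. Let $\mathbf Q_1\in\mathbb R^{v_1\times s_1}$ have full column rank, satisfy $\mathbf Q_1^T\mathbf 1_{v_1}=\mathbf 0$ and have no zero row; let $\mathbf K\in\mathbb R^{v_2\times s_2}$ have full column rank; $\mathbf Q_2=(\mathbf 0_{s_2},\mathbf K^T)^T$, $\mathbf A=\mathrm{diag}(\mathbf Q_1,\mathbf Q_2)$. A design is feasible for $\mathbf A^T\theta$ if $\mathcal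 C(\mathbf A)\subseteq\mathcal C(\mathbf M(\xi))$; its information matrix is then $\mathbf N_{\mathbf A}(\xi)=(\mathbf A^T\mathbf M^-(\xi)\mathbf A)^{-1}$. A design is $\Phi$-optimal for $\mathbf A^T\theta$ if it is feasible and maximizes $\Phi(\mathbf N_{\mathbf A}(\xi))$ over all feasible designs. An information function is a positively homogeneous, concave, nonnegative, nonconstant, upper semicontinuous function on nonnegative definite $s\times s$ matrices ($s=s_1+s_2$); it is eigenvalue-based if it depends only on the eigenvalues of its argument. *)

From HB Require Import structures.
From mathcomp Require Import all_boot all_order all_algebra.
From mathcomp Require Import reals.
Set Implicit Arguments. Unset Strict Implicit. Unset Printing Implicit Defensive.
Import Order.TTheory GRing.Theory Num.Theory.
Local Open Scope ring_scope.

Section Defs.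
Variable R : realType.

Definition nnd n (M : 'M[R]_n) : Prop :=
  M^T = M /\ forall x : 'cV[R]_n, 0 <= (x^T *m M *m x) 0 0.

Definition pos_homogeneous s (Phi : 'M[R]_s -> R) : Prop :=
  forall (c : R) M, 0 < c -> nnd M -> Phi (c *: M) = c * Phi M.
Definition concave_nnd s (Phi : 'M[R]_s -> R) : Prop :=
  forall (a : R) M N, 0 <= a <= 1 -> nnd M -> nnd N ->
    (1 - a) * Phi M + a * Phi N <= Phi ((1 - a) *: M + a *: N).
Definition nonneg_nnd s (Phi : 'M[R]_s -> R) : Prop :=
  forall M, nnd M -> 0 <= Phi M.
Definition nonconstant_nnd s (Phi : 'M[R]_s -> R) : Prop :=
  exists M N, nnd M /\ nnd N /\ Phi M <> Phi N.
Definition usc_nnd s (Phi : 'M[R]_s -> R) : Prop :=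
  forall M, nnd M -> forall e : R, 0 < e -> exists2 del : R, 0 < del &
    forall N, nnd N -> (forall i j, `|N i j - M i j| < del) -> Phi N < Phi M + e.
Definition information_function s (Phi : 'M[R]_s -> R) : Prop :=
  [/\ pos_homogeneous Phi, concave_nnd Phi, nonneg_nnd Phi,
      nonconstant_nnd Phi & usc_nnd Phi].
(* depends only on the eigenvalues (with multiplicities), i.e. on the
   characteristic polynomial *)
Definition eigenvalue_based s (Phi : 'M[R]_s -> R) : Prop :=
  forall M N, nnd M -> nnd N -> char_poly M = char_poly N -> Phi M = Phi N.

Definition prob_vec n (w : 'I_n -> R) : Prop :=
  (forall i, 0 <= w i) /\ \sum_(i < n) w i = 1.
Definition design v1 d (xi : 'I_v1 -> 'I_d -> R) : Prop :=
  (forall i k, 0 <= xi i k) /\ \sum_(i < v1) \sum_(k < d) xi i k = 1.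

Definition fvec v1 v2 d (g : 'I_d -> 'cV[R]_v2) (i : 'I_v1) (k : 'I_d)
  : 'cV[R]_(v1 + (1 + v2)) :=
  col_mx (delta_mx i 0) (col_mx 1 (g k)).

Definition moment v1 v2 d (lam : 'I_v1 -> R) (g : 'I_d -> 'cV[R]_v2)
  (xi : 'I_v1 -> 'I_d -> R) : 'M[R]_(v1 + (1 + v2)) :=
  \sum_(i < v1) \sum_(k < d)
     (xi i k * lam i) *: (fvec g i k *m (fvec g i k)^T).

Definition Amat v1 v2 s1 s2 (Q1 : 'M[R]_(v1, s1)) (K : 'M[R]_(v2, s2))
  : 'M[R]_(v1 + (1 + v2), s1 + s2) :=
  block_mx Q1 0 0 (col_mx (0 : 'M[R]_(1, s2)) K).

(* feasibility: C(A) included in C(M(xi)) *)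
Definition feasible m s (A : 'M[R]_(m, s)) (M : 'M[R]_m) : bool :=
  (A^T <= M^T)%MS.

(* information matrix (A^T M^- A)^{-1}; pinvmx M is a generalized inverse
   (M *m pinvmx M *m M = M) *)
Definition infmat m s (A : 'M[R]_(m, s)) (M : 'M[R]_m) : 'M[R]_s :=
  invmx (A^T *m pinvmx M *m A).

Definition Phi_optimal v1 v2 d s1 s2 (Phi : 'M[R]_(s1 + s2) -> R)
  (lam : 'I_v1 -> R) (g : 'I_d -> 'cV[R]_v2)
  (Q1 : 'M[R]_(v1, s1)) (K : 'M[R]_(v2, s2)) (xi : 'I_v1 -> 'I_d -> R) : Prop :=
  [/\ design xi, feasible (Amat Q1 K) (moment lam g xi) &
      forall eta, design eta -> feasible (Amat Q1 K) (moment lam g eta) ->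
        Phi (infmat (Amat Q1 K) (moment lam g eta))
          <= Phi (infmat (Amat Q1 K) (moment lam g xi))].

End Defs.

From HB Require Import structures.
From mathcomp Require Import all_boot all_order all_algebra.
From mathcomp Require Import reals.
From mathcomp Require Import ring lra.
Set Implicit Arguments. Unset Strict Implicit. Unset Printing Implicit Defensive.
Import Order.TTheory GRing.Theory Num.Theory.
Local Open Scope ring_scope.

(* Let w be the row marginal of an optimal design xi and alpha its
   lambda-weighted column marginal.  For z = (a, b, c), a variance
   decomposition over alpha splits the quadratic form of M(w (x) alpha) at z
   into the M(xi)-forms at two vectors u1, u2 whose images under A^T are the
   two blocks of A^T z (this is where Q1^T 1 = 0 enters).  Hence the kernel of
   M(w (x) alpha) is killed by A^T, so the product design is feasible, and,
   since x^T N_A(xi) x is the minimum of u^T M(xi) u over A^T u = x,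
   N_A(w (x) alpha) dominates (N + J N J) / 2 in the Loewner order, where
   N = N_A(xi) and J = diag(I, -I).  An eigenvalue-based Phi takes the same
   value at N and J N J, so concavity and monotonicity of Phi give
   Phi(N_A(w (x) alpha)) >= Phi(N). *)

Lemma linear_term_eq0 (R : realFieldType) (a b : R) :
  0 <= b -> (forall t, 0 <= t * a + t ^+ 2 * b) -> a = 0.
Proof.
move=> b_ge0 ge0; have b1_neq0 : b + 1 != 0 by rewrite gt_eqF //; lra.
have := ge0 (- a / (b + 1)).
have -> : - a / (b + 1) * a + (- a / (b + 1)) ^+ 2 * b = - (a / (b + 1)) ^+ 2.
  by field.
rewrite oppr_ge0 => sq_le0.
have : (a / (b + 1)) ^+ 2 == 0 by rewrite eq_le sq_le0 sqr_ge0.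
by rewrite sqrf_eq0 mulf_eq0 invr_eq0 (negPf b1_neq0) orbF => /eqP.
Qed.

Lemma char_poly_conj (R : comNzRingType) n (P Q N : 'M[R]_n) :
  Q *m P = 1%:M -> char_poly (P *m N *m Q) = char_poly N.
Proof.
move=> QP; rewrite /char_poly /char_poly_mx.
set P' := map_mx polyC P; set Q' := map_mx polyC Q.
have QP' : Q' *m P' = 1%:M by rewrite -map_mxM QP map_mx1.
have -> : 'X%:M - map_mx polyC (P *m N *m Q) =
    P' *m ('X%:M - map_mx polyC N) *m Q'.
  rewrite !map_mxM mulmxBr mulmxBl scalar_mxC -/P' -/Q'.
  by rewrite -[_ *m P' *m Q']mulmxA (mulmx1C QP') mulmx1.
by rewrite !det_mulmx mulrC mulrA -det_mulmx QP' det1 mul1r.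
Qed.

Lemma full_col_rank_mulmx_eq0 (F : fieldType) m n (A : 'M[F]_(m, n)) (y : 'cV[F]_n) :
  \rank A = n -> A *m y = 0 -> y = 0.
Proof.
move=> rankA Ay0; have freeAT : row_free A^T by rewrite /row_free mxrank_tr rankA.
by apply: trmx_inj; apply/eqP; rewrite trmx0 -(mulmx_free_eq0 _ freeAT) -trmx_mul Ay0 trmx0.
Qed.

Lemma submx_ker (F : fieldType) p n m (A : 'M[F]_(p, m)) (B : 'M[F]_(n, m)) :
  (forall z : 'cV[F]_m, B *m z = 0 -> A *m z = 0) -> (A <= B)%MS.
Proof.
move=> kerBA; rewrite submxE; apply/eqP/matrixP => i j.
have /kerBA : B *m col j (cokermx B) = 0 by rewrite colE mulmxA mulmx_coker mul0mx.
by rewrite colE mulmxA -colE => /matrixP /(_ i 0); rewrite !mxE.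
Qed.

Section QuadraticForms.
Variable R : realType.
Implicit Types (n : nat).

Definition bilin n (M : 'M[R]_n) (x y : 'cV[R]_n) : R := (x^T *m M *m y) 0 0.
Definition quad n (M : 'M[R]_n) (x : 'cV[R]_n) : R := bilin M x x.

Lemma bilinDl n (M : 'M[R]_n) x y z : bilin M (x + y) z = bilin M x z + bilin M y z.
Proof. by rewrite /bilin linearD !mulmxDl mxE. Qed.
Lemma bilinDr n (M : 'M[R]_n) x y z : bilin M z (x + y) = bilin M z x + bilin M z y.
Proof. by rewrite /bilin mulmxDr mxE. Qed.
Lemma bilinZl n (M : 'M[R]_n) a x y : bilin M (a *: x) y = a * bilin M x y.
Proof. by rewrite /bilin linearZ -!scalemxAl mxE. Qed.
Lemma bilinZr n (M : 'M[R]_n) a x y : bilin M x (a *: y) = a * bilin M x y.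
Proof. by rewrite /bilin -scalemxAr mxE. Qed.
Lemma bilinNl n (M : 'M[R]_n) x y : bilin M (- x) y = - bilin M x y.
Proof. by rewrite -scaleN1r bilinZl mulN1r. Qed.
Lemma bilinNr n (M : 'M[R]_n) x y : bilin M x (- y) = - bilin M x y.
Proof. by rewrite -scaleN1r bilinZr mulN1r. Qed.

Lemma bilin_addmx n (M N : 'M[R]_n) x y : bilin (M + N) x y = bilin M x y + bilin N x y.
Proof. by rewrite /bilin mulmxDr mulmxDl mxE. Qed.
Lemma bilin_scalemx n (M : 'M[R]_n) a x y : bilin (a *: M) x y = a * bilin M x y.
Proof. by rewrite /bilin -scalemxAr -scalemxAl mxE. Qed.
Lemma bilin_oppmx n (M : 'M[R]_n) x y : bilin (- M) x y = - bilin M x y.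
Proof. by rewrite -scaleN1r bilin_scalemx mulN1r. Qed.

Lemma bilinC n (M : 'M[R]_n) x y : M^T = M -> bilin M x y = bilin M y x.
Proof.
move=> symM; rewrite /bilin.
have -> : x^T *m M *m y = (y^T *m M *m x)^T by rewrite !trmx_mul trmxK symM mulmxA.
by rewrite mxE.
Qed.

Lemma bilin_mulmx n (M : 'M[R]_n) x y : bilin M x y = (x^T *m (M *m y)) 0 0.
Proof. by rewrite /bilin mulmxA. Qed.

Lemma quad_conj n (P N : 'M[R]_n) x : quad (P^T *m N *m P) x = quad N (P *m x).
Proof. by rewrite /quad /bilin trmx_mul !mulmxA. Qed.

Lemma quad_parallelogram n (M : 'M[R]_n) x y :
  quad M (x + y) + quad M (x - y) = 2%:R * quad M x + 2%:R * quad M y.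
Proof. rewrite /quad !(bilinDl, bilinDr, bilinNl, bilinNr); ring. Qed.

Lemma dotmx_self_eq0 n (y : 'cV[R]_n) : (y^T *m y) 0 0 = 0 -> y = 0.
Proof.
rewrite mxE (eq_bigr (fun i => y i 0 ^+ 2)) => [|i _]; last by rewrite mxE expr2.
move=> /eqP; rewrite psumr_eq0 => [/allP y0|i _]; last exact: sqr_ge0.
apply/matrixP => i j; rewrite ord1 mxE; apply/eqP; rewrite -sqrf_eq0.
exact: y0 (mem_index_enum _).
Qed.

Lemma nnd_quad_eq0 n (M : 'M[R]_n) z : nnd M -> quad M z = 0 -> M *m z = 0.
Proof.
move=> [symM ge0] qz0; set y := M *m z.
have zMy : bilin M z y = (y^T *m y) 0 0.
  by rewrite /bilin /y trmx_mul symM.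
suff S0 : 2%:R * (y^T *m y) 0 0 = 0 by apply: dotmx_self_eq0; lra.
apply: (@linear_term_eq0 _ _ (quad M y)) => [|t]; first exact: ge0.
have q_ge0 : 0 <= quad M (z + t *: y) := ge0 _.
rewrite /quad !(bilinDl, bilinDr, bilinZl, bilinZr) (bilinC y z symM) in q_ge0.
rewrite -/(quad M z) qz0 zMy in q_ge0; rewrite /quad; nra.
Qed.

Lemma nndD n (M N : 'M[R]_n) : nnd M -> nnd N -> nnd (M + N).
Proof.
move=> [symM M_ge0] [symN N_ge0]; split=> [|x]; first by rewrite linearD /= symM symN.
by rewrite -[_ 0 0]/(bilin _ x x) bilin_addmx; exact: addr_ge0 (M_ge0 x) (N_ge0 x).
Qed.

Lemma nndZ n (M : 'M[R]_n) a : 0 <= a -> nnd M -> nnd (a *: M).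
Proof.
move=> a_ge0 [symM M_ge0]; split=> [|x]; first by rewrite linearZ /= symM.
by rewrite -[_ 0 0]/(bilin _ x x) bilin_scalemx; exact: mulr_ge0 a_ge0 (M_ge0 x).
Qed.

Lemma nnd_conj n (P N : 'M[R]_n) : nnd N -> nnd (P^T *m N *m P).
Proof.
move=> [symN N_ge0]; split=> [|x]; first by rewrite !trmx_mul trmxK symN mulmxA.
by rewrite -[_ 0 0]/(quad _ x) quad_conj; exact: N_ge0.
Qed.

Lemma nnd_sub n (M N : 'M[R]_n) :
  M^T = M -> N^T = N -> (forall x, quad N x <= quad M x) -> nnd (M - N).
Proof.
move=> symM symN le_NM; split=> [|x]; first by rewrite linearB /= symM symN.
by rewrite -[_ 0 0]/(bilin _ x x) bilin_addmx bilin_oppmx subr_ge0; apply: le_NM.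
Qed.

End QuadraticForms.

Section InformationMatrix.
Variables (R : realType) (m s : nat) (A : 'M[R]_(m, s)) (M : 'M[R]_m).
Hypotheses (nndM : nnd M) (rankA : \rank A = s) (feasA : feasible A M).

Let symM : M^T = M. Proof. by case: nndM. Qed.

Lemma feasible_ker (z : 'cV[R]_m) : M *m z = 0 -> A^T *m z = 0.
Proof.
by move=> Mz0; have := mulmxKpV feasA; rewrite symM => <-; rewrite -!mulmxA Mz0 !mulmx0.
Qed.

Let H := (A^T *m pinvmx M)^T.
Let AE : A = M *m H.
Proof.
have := mulmxKpV feasA; rewrite symM => AMM.
by rewrite /H -{1}symM -trmx_mul AMM trmxK.
Qed.

Variable G : 'M[R]_m.
Hypothesis MGM : M *m G *m M = M.

Let MGA : M *m G *m A = A.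
Proof. by rewrite AE mulmxA MGM. Qed.

Let C := A^T *m G *m A.
Let CE : C = H^T *m M *m H.
Proof. by rewrite /C {1}AE trmx_mul symM -!mulmxA (mulmxA M) MGA {1}AE mulmxA. Qed.

Let C_unit : C \in unitmx.
Proof.
rewrite unitmxE unitfE; apply/negP => /det0P [v v_neq0 vC0]; case/eqP: v_neq0.
have MHv0 : M *m (H *m v^T) = 0.
  apply: nnd_quad_eq0 => //.
  rewrite /quad /bilin trmx_mul trmxK !mulmxA -(mulmxA v H^T M) -(mulmxA v _ H) -CE.
  by rewrite vC0 mul0mx mxE.
apply: trmx_inj; rewrite trmx0; apply: (full_col_rank_mulmx_eq0 rankA).
by rewrite AE -mulmxA.
Qed.

Let N := invmx C.

Lemma infmat_sym : N^T = N.
Proof. by rewrite /N trmx_inv CE !trmx_mul trmxK symM mulmxA. Qed.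

(* The minimiser of [quad M u] subject to [A^T *m u = x]. *)
Let u0 (x : 'cV[R]_s) := G *m A *m N *m x.

Let A_u0 x : A^T *m u0 x = x.
Proof. by rewrite /u0 !mulmxA -/C mulmxV // mul1mx. Qed.

Let ATGTM : A^T *m G^T *m M = A^T.
Proof. by rewrite -{2}MGA !trmx_mul symM mulmxA. Qed.

Let quad_u0 x : quad M (u0 x) = quad N x.
Proof.
have -> : quad M (u0 x) = (x^T *m N *m (A^T *m G^T *m M *m G *m A) *m N *m x) 0 0.
  by rewrite /quad /bilin /u0 !trmx_mul infmat_sym !mulmxA.
by rewrite ATGTM -/C -(mulmxA _ C) mulmxV // mulmx1.
Qed.

Let bilin_u0 v x : A^T *m v = 0 -> bilin M v (u0 x) = 0.
Proof.
move=> ATv0; rewrite /bilin /u0 !mulmxA -(mulmxA _ M G) -(mulmxA _ (M *m G)) MGA.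
have -> : v^T *m A = (A^T *m v)^T by rewrite trmx_mul trmxK.
by rewrite ATv0 trmx0 !mul0mx mxE.
Qed.

Lemma infmat_quad_min x u : A^T *m u = x -> quad N x <= quad M u.
Proof.
move=> ATu; have -> : u = (u - u0 x) + u0 x by rewrite subrK.
have ATv0 : A^T *m (u - u0 x) = 0 by rewrite mulmxBr A_u0 ATu subrr.
move: (u - u0 x) ATv0 => v ATv0.
rewrite /quad bilinDl !bilinDr bilin_u0 // (bilinC _ _ symM) bilin_u0 //.
by rewrite addr0 add0r -/(quad M (u0 x)) quad_u0 lerDr; exact: nndM.2.
Qed.

Lemma infmat_quad_attained x : exists2 u, A^T *m u = x & quad M u = quad N x.
Proof. by exists (u0 x). Qed.

Lemma nnd_infmat : nnd N.
Proof.
split=> [|x]; first exact: infmat_sym.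
by have [u _ Nx] := infmat_quad_attained x; rewrite -[_ 0 0]/(quad N x) -Nx; exact: nndM.2.
Qed.

End InformationMatrix.

Lemma information_function_mono (R : realType) s (Phi : 'M[R]_s -> R) B C :
  information_function Phi -> nnd B -> nnd (C - B) -> Phi B <= Phi C.
Proof.
move=> infoPhi nndB nndCB; have [homPhi concPhi ge0Phi _ _] := infoPhi.
have half01 : 0 <= (2^-1 : R) <= 1 by apply/andP; split; lra.
have := concPhi _ _ _ half01 (nndZ (ler0n _ 2) nndB) (nndZ (ler0n _ 2) nndCB).
rewrite !homPhi // !scalerA (_ : (1 - 2^-1) * 2%:R = 1) ?mulVf ?pnatr_eq0 //; last by field.
rewrite !scale1r [B + _]addrC subrK; have := ge0Phi _ nndCB; lra.
Qed.

Section SignFlip.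
Variables (R : realType) (s1 s2 : nat).

Definition sign_mx : 'M[R]_(s1 + s2) := block_mx 1%:M 0 0 (- 1%:M).

Lemma tr_sign_mx : sign_mx^T = sign_mx.
Proof. by rewrite /sign_mx tr_block_mx !trmx0 trmx1 linearN /= trmx1. Qed.

Lemma sign_mxK : sign_mx *m sign_mx = 1%:M.
Proof.
rewrite /sign_mx mulmx_block !(mulmx0, mul0mx, mulmx1, addr0, add0r).
by rewrite mulmxN mulmx1 opprK -scalar_mx_block.
Qed.

Lemma mul_sign_mx (x : 'cV[R]_(s1 + s2)) :
  sign_mx *m x = col_mx (usubmx x) 0 - col_mx 0 (dsubmx x).
Proof.
rewrite -{1}[x]vsubmxK /sign_mx mul_block_col !(mul1mx, mul0mx, addr0, add0r).
by rewrite opp_col_mx oppr0 add_col_mx addr0 sub0r mulNmx mul1mx.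
Qed.

(* This is the block-diagonal part of N. *)
Definition sign_avg (N : 'M[R]_(s1 + s2)) := 2^-1 *: (N + sign_mx *m N *m sign_mx).

Lemma quad_sign_avg N x :
  quad (sign_avg N) x = quad N (col_mx (usubmx x) 0) + quad N (col_mx 0 (dsubmx x)).
Proof.
rewrite /quad bilin_scalemx bilin_addmx -{1}tr_sign_mx.
rewrite -!/(quad _ _) quad_conj mul_sign_mx.
have {1}-> : x = col_mx (usubmx x) 0 + col_mx 0 (dsubmx x).
  by rewrite add_col_mx addr0 add0r vsubmxK.
by rewrite quad_parallelogram mulrDr !mulrA mulVf ?pnatr_eq0 ?mul1r.
Qed.

Lemma nnd_sign_avg N : nnd N -> nnd (sign_avg N).
Proof.
move=> nndN; apply: nndZ; first by rewrite invr_ge0 ler0n.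
by apply: nndD => //; rewrite -{1}tr_sign_mx; apply: nnd_conj.
Qed.

Lemma information_function_sign_avg (Phi : 'M[R]_(s1 + s2) -> R) N :
  information_function Phi -> eigenvalue_based Phi -> nnd N ->
  Phi N <= Phi (sign_avg N).
Proof.
move=> [_ concPhi _ _ _] eigPhi nndN.
have nndJNJ : nnd (sign_mx *m N *m sign_mx).
  by rewrite -{1}tr_sign_mx; apply: nnd_conj.
have PhiJNJ : Phi (sign_mx *m N *m sign_mx) = Phi N.
  by apply: eigPhi => //; apply: char_poly_conj; apply: sign_mxK.
have half01 : 0 <= (2^-1 : R) <= 1 by apply/andP; split; lra.
have := concPhi _ _ _ half01 nndN nndJNJ.
rewrite PhiJNJ /sign_avg (_ : 1 - 2^-1 = 2^-1 :> R) -?scalerDr; last by field.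
lra.
Qed.

End SignFlip.

Section BlockSplitting.
Variables (R : realType) (m s1 s2 : nat) (A : 'M[R]_(m, s1 + s2)) (Mx Mp : 'M[R]_m)
  (u1 u2 : 'cV[R]_m -> 'cV[R]_m).
Hypotheses (nndMx : nnd Mx) (nndMp : nnd Mp) (rankA : \rank A = (s1 + s2)%N)
  (feasMx : feasible A Mx)
  (quad_split : forall z, quad Mp z = quad Mx (u1 z) + quad Mx (u2 z))
  (A_u1 : forall z, A^T *m u1 z = col_mx (usubmx (A^T *m z)) 0)
  (A_u2 : forall z, A^T *m u2 z = col_mx 0 (dsubmx (A^T *m z))).

Let pinvK (M : 'M[R]_m) : M *m pinvmx M *m M = M := mulmxKpV (submx_refl M).

Lemma feasible_split : feasible A Mp.
Proof.
apply: submx_ker; rewrite nndMp.1 => z Mpz0.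
have /eqP : quad Mp z = 0 by rewrite /quad bilin_mulmx Mpz0 mulmx0 mxE.
rewrite quad_split paddr_eq0 ?nndMx.2 // => /andP [/eqP qu1 /eqP qu2].
have /eqP := feasible_ker nndMx feasMx (nnd_quad_eq0 nndMx qu1).
have /eqP := feasible_ker nndMx feasMx (nnd_quad_eq0 nndMx qu2).
rewrite A_u1 A_u2 !col_mx_eq0 !eqxx andbT => /eqP d0 /eqP u0.
by rewrite -[A^T *m z]vsubmxK d0 u0 col_mx0.
Qed.

Lemma quad_infmat_split x :
  quad (sign_avg (infmat A Mx)) x <= quad (infmat A Mp) x.
Proof.
have [z ATz <-] := infmat_quad_attained nndMp rankA feasible_split (pinvK Mp) x.
have Nx_min := infmat_quad_min nndMx rankA feasMx (pinvK Mx).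
by rewrite quad_sign_avg quad_split lerD // Nx_min // ?A_u1 ?A_u2 ATz.
Qed.

Lemma information_function_split (Phi : 'M[R]_(s1 + s2) -> R) :
  information_function Phi -> eigenvalue_based Phi ->
  Phi (infmat A Mx) <= Phi (infmat A Mp).
Proof.
move=> infoPhi eigPhi.
have nndNx := nnd_infmat nndMx rankA feasMx (pinvK Mx).
have nndNp := nnd_infmat nndMp rankA feasible_split (pinvK Mp).
apply: le_trans (information_function_sign_avg infoPhi eigPhi nndNx) _.
apply: information_function_mono (nnd_sign_avg nndNx) _ => //.
by apply: nnd_sub quad_infmat_split; [case: nndNp | case: (nnd_sign_avg nndNx)].
Qed.

End BlockSplitting.

Lemma variance_decomposition (F : comRingType) (J : finType) (al h : J -> F) a :
  \sum_j al j = 1 ->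
  \sum_j al j * (a + h j) ^+ 2 =
  (a + \sum_j al j * h j) ^+ 2 + \sum_j al j * (h j - \sum_j al j * h j) ^+ 2.
Proof.
move=> al1; set mh := \sum_j al j * h j.
have expand c : \sum_j al j * (c + h j) ^+ 2 =
    c ^+ 2 + 2%:R * c * mh + \sum_j al j * h j ^+ 2.
  transitivity (\sum_j (al j * c ^+ 2 + 2%:R * c * (al j * h j) + al j * h j ^+ 2)).
    by apply: eq_bigr => j _; ring.
  by rewrite !big_split /= -mulr_suml al1 mul1r -mulr_sumr.
have -> : \sum_j al j * (h j - mh) ^+ 2 = \sum_j al j * (- mh + h j) ^+ 2.
  by apply: eq_bigr => j _; rewrite addrC.
rewrite !expand; ring.
Qed.

Section Marginals.
Variables (F : fieldType) (I J : finType) (lam : I -> F) (xi : I -> J -> F).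

Definition marginal i := \sum_j xi i j.
Definition lam_mass := \sum_i lam i * marginal i.
Definition weighted_marginal j := (\sum_i lam i * xi i j) / lam_mass.
Definition weighted_mean (h : J -> F) := \sum_j weighted_marginal j * h j.

Hypothesis lam_mass_neq0 : lam_mass != 0.

Lemma sum_weighted_marginal : \sum_j weighted_marginal j = 1.
Proof.
rewrite /weighted_marginal -mulr_suml exchange_big /=.
rewrite (eq_bigr (fun i => lam i * marginal i)) ?divff // => i _.
by rewrite /marginal mulr_sumr.
Qed.

Lemma sumsq_product_marginals (a : I -> F) (h : J -> F) :
  \sum_i \sum_j (marginal i * weighted_marginal j * lam i) * (a i + h j) ^+ 2 =
  \sum_i \sum_j (xi i j * lam i) * (a i + weighted_mean h) ^+ 2 +
  \sum_i \sum_j (xi i j * lam i) * (h j - weighted_mean h) ^+ 2.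
Proof.
set V := \sum_j weighted_marginal j * (h j - weighted_mean h) ^+ 2.
have -> : \sum_i \sum_j (marginal i * weighted_marginal j * lam i) * (a i + h j) ^+ 2 =
    \sum_i (marginal i * lam i) * ((a i + weighted_mean h) ^+ 2 + V).
  apply: eq_bigr => i _; rewrite -variance_decomposition ?sum_weighted_marginal //.
  by rewrite mulr_sumr; apply: eq_bigr => j _; ring.
have -> : \sum_i \sum_j (xi i j * lam i) * (a i + weighted_mean h) ^+ 2 =
    \sum_i (marginal i * lam i) * (a i + weighted_mean h) ^+ 2.
  by apply: eq_bigr => i _; rewrite /marginal !mulr_suml.
have -> : \sum_i \sum_j (xi i j * lam i) * (h j - weighted_mean h) ^+ 2 = lam_mass * V.
  rewrite exchange_big /V mulr_sumr; apply: eq_bigr => j _ /=.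
  rewrite -mulr_suml /weighted_marginal mulrA [lam_mass * _]mulrCA divff // mulr1.
  by congr (_ * _); apply: eq_bigr => i _; rewrite mulrC.
rewrite (eq_bigr _ (fun i _ => mulrDr _ _ _)) big_split /= -mulr_suml.
by congr (_ + _ * _); apply: eq_bigr => i _; rewrite mulrC.
Qed.

End Marginals.

Section Model.
Variables (R : realType) (v1 v2 d s1 s2 : nat) (lam : 'I_v1 -> R) (g : 'I_d -> 'cV[R]_v2).

Lemma fvec_mul i k (z : 'cV[R]_(v1 + (1 + v2))) :
  ((fvec g i k)^T *m z) 0 0 =
  usubmx z i 0 + usubmx (dsubmx z) 0 0 + ((g k)^T *m dsubmx (dsubmx z)) 0 0.
Proof.
rewrite -{1}[z]vsubmxK -[dsubmx z]vsubmxK /fvec !tr_col_mx !mul_row_col.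
rewrite trmx_delta -rowE trmx1 mul1mx [LHS]mxE [X in _ + X]mxE addrA [X in X + _ + _]mxE.
by rewrite vsubmxK.
Qed.

Lemma quad_moment xi z :
  quad (moment lam g xi) z =
  \sum_i \sum_k (xi i k * lam i) *
    (usubmx z i 0 + usubmx (dsubmx z) 0 0 + ((g k)^T *m dsubmx (dsubmx z)) 0 0) ^+ 2.
Proof.
rewrite /quad /bilin /moment mulmx_sumr mulmx_suml summxE; apply: eq_bigr => i _.
rewrite mulmx_sumr mulmx_suml summxE; apply: eq_bigr => k _.
rewrite -scalemxAr -scalemxAl mxE; congr (_ * _); set f := fvec g i k.
have -> : z^T *m (f *m f^T) *m z = (f^T *m z)^T *m (f^T *m z).
  by rewrite trmx_mul trmxK !mulmxA.
by rewrite mxE big_ord1 mxE expr2 fvec_mul.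
Qed.

Lemma nnd_moment xi : (forall i k, 0 <= xi i k) -> (forall i, 0 <= lam i) ->
  nnd (moment lam g xi).
Proof.
move=> xi_ge0 lam_ge0; split=> [|z].
  rewrite /moment !raddf_sum; apply: eq_bigr => i _; rewrite raddf_sum.
  by apply: eq_bigr => k _; rewrite [LHS]/= linearZ /= trmx_mul trmxK.
rewrite -[_ 0 0]/(quad _ z) quad_moment; apply: sumr_ge0 => i _; apply: sumr_ge0 => k _.
by rewrite mulr_ge0 ?sqr_ge0 ?mulr_ge0.
Qed.

Lemma tr_Amat_mul (Q1 : 'M[R]_(v1, s1)) (K : 'M[R]_(v2, s2)) (z : 'cV[R]_(v1 + (1 + v2))) :
  (Amat Q1 K)^T *m z = col_mx (Q1^T *m usubmx z) (K^T *m dsubmx (dsubmx z)).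
Proof.
rewrite -{1}[z]vsubmxK -[dsubmx z]vsubmxK /Amat tr_block_mx tr_col_mx !trmx0.
by rewrite mul_block_col mul_row_col !mul0mx !addr0 !add0r vsubmxK.
Qed.

Lemma rank_Amat (Q1 : 'M[R]_(v1, s1)) (K : 'M[R]_(v2, s2)) :
  \rank (Amat Q1 K) = (\rank Q1 + \rank K)%N.
Proof. by rewrite rank_diag_block_mx rank_col_0mx. Qed.

End Model.

Lemma design_prod (R : realType) v1 d (w : 'I_v1 -> R) (alpha : 'I_d -> R) :
  prob_vec w -> prob_vec alpha -> design (fun i k => w i * alpha k).
Proof.
move=> [w_ge0 w1] [alpha_ge0 alpha1]; split=> [i k|]; first exact: mulr_ge0.
by rewrite -w1; apply: eq_bigr => i _; rewrite -mulr_sumr alpha1 mulr1.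
Qed.

Section ProductDesign.
Variables (R : realType) (v1 v2 d s1 s2 : nat) (lam : 'I_v1 -> R) (g : 'I_d -> 'cV[R]_v2)
  (Q1 : 'M[R]_(v1, s1)) (K : 'M[R]_(v2, s2)) (xi : 'I_v1 -> 'I_d -> R).
Hypotheses (lam_gt0 : forall i, 0 < lam i) (xi_design : design xi)
  (rankQ1 : \rank Q1 = s1) (rankK : \rank K = s2)
  (Q1_centered : Q1^T *m (const_mx 1 : 'cV[R]_v1) = 0).

Let lam_ge0 i : 0 <= lam i := ltW (lam_gt0 i).

Lemma prob_vec_marginal : prob_vec (marginal xi).
Proof. by case: xi_design => xi_ge0 xi1; split=> // i; apply: sumr_ge0. Qed.

Lemma lam_mass_gt0 : 0 < lam_mass lam xi.
Proof.
have [w_ge0 w1] := prob_vec_marginal.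
have lw_ge0 i : 0 <= lam i * marginal xi i by rewrite mulr_ge0.
rewrite lt_def sumr_ge0 // andbT; apply/negP => /eqP /psumr_eq0P.
move=> /(_ (fun i _ => lw_ge0 i)) lw0; move: w1; rewrite big1 => [/esym/eqP|i _].
  by rewrite oner_eq0.
by have /eqP := lw0 i isT; rewrite mulf_eq0 gt_eqF // => /eqP.
Qed.

Lemma prob_vec_weighted_marginal : prob_vec (weighted_marginal lam xi).
Proof.
split; last exact/sum_weighted_marginal/lt0r_neq0/lam_mass_gt0.
move=> k; rewrite divr_ge0 ?(ltW lam_mass_gt0) //.
by apply: sumr_ge0 => i _; rewrite mulr_ge0 ?xi_design.1.
Qed.

Let pi i k := marginal xi i * weighted_marginal lam xi k.
Let mean_g (c : 'cV[R]_v2) := weighted_mean lam xi (fun k => ((g k)^T *m c) 0 0).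
(* For z = (a, b, c): u1 moves the alpha-mean of g^T c into the intercept and u2
   keeps the centred covariate part. *)
Let u1 (z : 'cV[R]_(v1 + (1 + v2))) : 'cV[R]_(v1 + (1 + v2)) :=
  col_mx (usubmx z) (col_mx (usubmx (dsubmx z) + (mean_g (dsubmx (dsubmx z)))%:M) 0).
Let u2 (z : 'cV[R]_(v1 + (1 + v2))) : 'cV[R]_(v1 + (1 + v2)) :=
  col_mx (- mean_g (dsubmx (dsubmx z)) *: const_mx 1) (col_mx 0 (dsubmx (dsubmx z))).

Let quad_moment_split z :
  quad (moment lam g pi) z = quad (moment lam g xi) (u1 z) + quad (moment lam g xi) (u2 z).
Proof.
rewrite !quad_moment /u1 /u2 !(col_mxKu, col_mxKd).
rewrite (sumsq_product_marginals _ (fun i => usubmx z i 0 + usubmx (dsubmx z) 0 0)).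
  congr (_ + _); do 2!apply: eq_bigr => ? _; congr (_ * _ ^+ 2).
    by rewrite mulmx0 !mxE eqxx mulr1n addr0 addrA.
  by rewrite !mxE mulr1 addr0 addrC.
exact/lt0r_neq0/lam_mass_gt0.
Qed.

Let A_u1 z :
  (Amat Q1 K)^T *m u1 z = col_mx (usubmx ((Amat Q1 K)^T *m z)) 0.
Proof. by rewrite !tr_Amat_mul /u1 !(col_mxKu, col_mxKd) mulmx0. Qed.

Let A_u2 z :
  (Amat Q1 K)^T *m u2 z = col_mx 0 (dsubmx ((Amat Q1 K)^T *m z)).
Proof.
by rewrite !tr_Amat_mul /u2 !(col_mxKu, col_mxKd) -scalemxAr Q1_centered scaler0.
Qed.

Let rankA : \rank (Amat Q1 K) = (s1 + s2)%N.
Proof. by rewrite rank_Amat rankQ1 rankK. Qed.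

Let nnd_moment_xi : nnd (moment lam g xi).
Proof. by apply: nnd_moment => // i k; case: xi_design. Qed.

Let nnd_moment_pi : nnd (moment lam g pi).
Proof.
apply: nnd_moment => // i k.
by rewrite mulr_ge0 ?prob_vec_marginal.1 ?prob_vec_weighted_marginal.1.
Qed.

Lemma feasible_product_design :
  feasible (Amat Q1 K) (moment lam g xi) -> feasible (Amat Q1 K) (moment lam g pi).
Proof.
move=> feas; exact: (feasible_split nnd_moment_xi nnd_moment_pi feas quad_moment_split A_u1 A_u2).
Qed.

Lemma information_product_design (Phi : 'M[R]_(s1 + s2) -> R) :
  information_function Phi -> eigenvalue_based Phi ->
  feasible (Amat Q1 K) (moment lam g xi) ->
  Phi (infmat (Amat Q1 K) (moment lam g xi)) <= Phi (infmat (Amat Q1 K) (moment lam g pi)).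
Proof.
move=> infoPhi eigPhi feas.
exact: (information_function_split nnd_moment_xi nnd_moment_pi rankA feas
  quad_moment_split A_u1 A_u2 infoPhi eigPhi).
Qed.

End ProductDesign.

Theorem theorem1 (R : realType) (v1 v2 d s1 s2 : nat)
  (lam : 'I_v1 -> R) (g : 'I_d -> 'cV[R]_v2)
  (Q1 : 'M[R]_(v1, s1)) (K : 'M[R]_(v2, s2))
  (Phi : 'M[R]_(s1 + s2) -> R) :
  (forall i, 0 < lam i) ->
  \rank Q1 = s1 ->
  Q1^T *m (const_mx 1 : 'cV[R]_v1) = 0 ->
  (forall i, row i Q1 != 0) ->
  \rank K = s2 ->
  information_function Phi ->
  eigenvalue_based Phi ->
  (exists xi, Phi_optimal Phi lam g Q1 K xi) ->
  exists (w : 'I_v1 -> R) (alpha : 'I_d -> R),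
    [/\ prob_vec w, prob_vec alpha &
        Phi_optimal Phi lam g Q1 K (fun i k => w i * alpha k)].
Proof.
(* No row of Q1 needs to be nonzero. *)
move=> lam_gt0 rankQ1 Q1_centered _ rankK infoPhi eigPhi [xi [xi_design feas_xi opt_xi]].
have w_prob := prob_vec_marginal xi_design.
have alpha_prob := prob_vec_weighted_marginal lam_gt0 xi_design.
exists (marginal xi), (weighted_marginal lam xi); split=> //; split.
- exact: design_prod.
- exact: feasible_product_design.
- move=> eta eta_design feas_eta; apply: le_trans (opt_xi _ eta_design feas_eta) _.
  exact: information_product_design.
Qed.
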